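(* Let $M=(I,O,T,t_0,\tau,\mathit{out})$ be a Moore system, let $\Phi$ be a CTL* state formula over inputs $I$ and outputs $O$, and let $A=(2^O,2^I,Q,q_0,\delta,\mathit{Acc})$ be an alternating hesitant tree automaton accepting exactly the computation trees satisfying $\Phi$. Then $M\models\Phi$ if and only if there exist functions $\mathit{rch}:Q\times T\to\{\mathit{true},\mathit{false}\}$ and $\rho:Q\times T\to\mathbb N$ satisfying $$\mathit{rch}(q_0,t_0)\wedge\bigwedge_{(q,t)\in Q\times T}\Big[\mathit{rch}(q,t)\rightarrow\delta(q,\mathit{out}(t))\big[(d,q')\mapsto \mathit{rch}(q',\tau(t,d))\wedge\rho(q,t)\triangleright_{q,q'}\rho(q',\tau(t,d))\big]\Big],$$ where the substitution replaces every atom $(d,q')$ of the positive Boolean formula $\delta(q,\mathit{out}(t))$ by the indicated conjunction, and $\triangleright_{q,q'}$ is: if $q,q'$ lie in the same set $Q^N_j$, the B\''uchi comparison ($\mathit{true}$ if $q\in\mathit{Acc}$, and $\rho(q,t)>\rho(q',\tau(t,d))$ otherwise); if $q,q'$ lie in the same set $Q^U_j$, the co-B\''uchi comparison ($\rho(q,t)>\rho(q',\tau(t,d))$ if $q\in\mathit{Acc}$, and $\rho(q,t)\ge\rho(q',\tau(t,d))$ otherwise); otherwise $\mathit{true}$.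
   Context: A Moore system has disjoint finite inputs $I$, outputs $O$, finite states $T$, initial state $t_0$, total transition function $\tau:T\times 2^I\to T$ and output function $\mathit{out}:T\to 2^O$; its computation tree has nodes $(2^I)^*$, node $w$ labelled $\mathit{out}(\tau(t_0,w))$, and $M\models\Phi$ means this tree satisfies $\Phi$ at the root. CTL* with inputs: state formulas are built from $\mathit{true},\mathit{false}$, outputs and negated outputs, $\wedge,\vee$, and $\mathsf A\varphi,\mathsf E\varphi$ for path formulas $\varphi$; path formulas are built from state formulas, inputs and negated inputs, $\wedge,\vee,\mathsf X,\mathsf U,\mathsf R$; on a tree path $n_1n_2\dots$ with $n_2=n_1\cdot e$, an input $i$ holds iff $i\in e$; otherwise semantics is standard. An alternating tree automaton $(2^O,2^I,Q,q_0,\delta,\mathit{acc})$ has $\delta:Q\times 2^O\to\mathcal B^+(2^I\times Q)$ (positive Boolean formulas, total with respect to directions); a run-tree on a computation tree labels the root with $(\epsilon,q_0)$ and, for a node labelled $(n,q)$, has children labelled $(n\cdot d_j,q_j)$ for a set $\{(d_j,q_j)\}$ satisfying $\delta(q,l(n))$; the automaton accepts if some run-tree has all branches accepting. It is hesitant if $Q$ is partitioned into sets $Q^N_1,\dots,Q^N_{k_N},Q^U_1,\dots,Q^U_{k_U}$ with a partial order on them such that for $q\in Q^N_j$ the atoms of $\delta(q,a)$ inside $Q^N_j$ are disjunctively related and all other atoms lie in lower sets, and dually for $q\in Q^U_j$ with conjunctively related atoms; a branch with state sequence $\pi$ is accepting iff either it eventually stays in some $Q^U_j$ and visits $\mathit{Acc}$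 finitely often, or eventually stays in some $Q^N_j$ and visits $\mathit{Acc}$ infinitely often. *)

From mathcomp Require Import all_boot.
Set Implicit Arguments. Unset Strict Implicit. Unset Printing Implicit Defensive.

(* CTL* with inputs.  Inputs I and outputs O are separate finite types *)
(* (hence disjoint); the alphabet 2^I is {set I}, 2^O is {set O}.      *)
Section CTLstar.
Variables (I O : finType).

Inductive sform : Type :=
  | STrue | SFalse
  | SOut of O | SNOut of O
  | SAnd of sform & sform | SOr of sform & sform
  | SA of pform | SE of pform
with pform : Type :=
  | PState of sform
  | PIn of I | PNIn of I
  | PAnd of pform & pform | POr of pform & pform
  | PX of pform | PU of pform & pform | PR of pform & pform.

Definition ltree := seq {set I} -> {set O}.

(* A path starting at node n is given by its stream of directions pi:
   the path is n, n.(pi 0), n.(pi 0).(pi 1), ...; input i holds at the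
   current position iff i \in pi 0. *)
Definition shift (pi : nat -> {set I}) (k : nat) : nat -> {set I} :=
  fun j => pi (k + j).

Fixpoint sat_s (l : ltree) (n : seq {set I}) (f : sform) {struct f} : Prop :=
  match f with
  | STrue => True
  | SFalse => False
  | SOut o => o \in l n
  | SNOut o => o \notin l n
  | SAnd f1 f2 => sat_s l n f1 /\ sat_s l n f2
  | SOr f1 f2 => sat_s l n f1 \/ sat_s l n f2
  | SA g => forall pi, sat_p l n pi g
  | SE g => exists pi, sat_p l n pi g
  end
with sat_p (l : ltree) (n : seq {set I}) (pi : nat -> {set I}) (g : pform)
    {struct g} : Prop :=
  match g with
  | PState f => sat_s l n f
  | PIn i => i \in pi 0
  | PNIn i => i \notin pi 0
  | PAnd g1 g2 => sat_p l n pi g1 /\ sat_p l n pi g2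
  | POr g1 g2 => sat_p l n pi g1 \/ sat_p l n pi g2
  | PX g1 => sat_p l (rcons n (pi 0)) (shift pi 1) g1
  | PU g1 g2 =>
      exists k, sat_p l (n ++ mkseq pi k) (shift pi k) g2 /\
        forall j, j < k -> sat_p l (n ++ mkseq pi j) (shift pi j) g1
  | PR g1 g2 =>
      forall k, sat_p l (n ++ mkseq pi k) (shift pi k) g2 \/
        exists j, j < k /\ sat_p l (n ++ mkseq pi j) (shift pi j) g1
  end.

End CTLstar.

Definition run_moore (I : finType) (T : Type) (tau : T -> {set I} -> T) (t0 : T)
  (w : seq {set I}) : T := foldl tau t0 w.

Definition comp_tree (I O T : finType) (t0 : T) (tau : T -> {set I} -> T)
  (out : T -> {set O}) : ltree I O :=
  fun w => out (run_moore tau t0 w).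

Definition moore_models (I O T : finType) (t0 : T) (tau : T -> {set I} -> T)
  (out : T -> {set O}) (Phi : sform I O) : Prop :=
  sat_s (comp_tree t0 tau out) [::] Phi.

Inductive pbf (A : Type) : Type :=
  | BTrue | BFalse | BAtom of A | BAnd of pbf A & pbf A | BOr of pbf A & pbf A.
Arguments BTrue {A}. Arguments BFalse {A}.

(* Value of the formula under the valuation v of its atoms; this is also
   the value after substituting each atom a by the proposition v a. *)
Fixpoint peval (A : Type) (v : A -> Prop) (b : pbf A) : Prop :=
  match b with
  | BTrue => True
  | BFalse => False
  | BAtom a => v a
  | BAnd b1 b2 => peval v b1 /\ peval v b2
  | BOr b1 b2 => peval v b1 \/ peval v b2
  end.

Fixpoint atoms (A : Type) (b : pbf A) : seq A :=
  match b with
  | BTrue | BFalse => [::]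
  | BAtom a => [:: a]
  | BAnd b1 b2 | BOr b1 b2 => atoms b1 ++ atoms b2
  end.

Fixpoint dnf (A : Type) (b : pbf A) : seq (seq A) :=
  match b with
  | BTrue => [:: [::]]
  | BFalse => [::]
  | BAtom a => [:: [:: a]]
  | BOr b1 b2 => dnf b1 ++ dnf b2
  | BAnd b1 b2 => [seq c1 ++ c2 | c1 <- dnf b1, c2 <- dnf b2]
  end.

Fixpoint cnf (A : Type) (b : pbf A) : seq (seq A) :=
  match b with
  | BTrue => [::]
  | BFalse => [:: [::]]
  | BAtom a => [:: [:: a]]
  | BAnd b1 b2 => cnf b1 ++ cnf b2
  | BOr b1 b2 => [seq c1 ++ c2 | c1 <- cnf b1, c2 <- cnf b2]
  end.

Definition disj_related (A : eqType) (P : pred A) (b : pbf A) : bool :=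
  all (fun c => size (undup (filter P c)) <= 1) (dnf b).

Definition conj_related (A : eqType) (P : pred A) (b : pbf A) : bool :=
  all (fun c => size (undup (filter P c)) <= 1) (cnf b).

(* The partition of Q is given by cls : Q -> K (the block Q_j of q is   *)
(* cls q); isN j tells whether block j is a Q^N block (true) or a Q^U   *)
(* block (false); ltK is the strict partial order on the blocks         *)
(* ("ltK j' j" = block j' is lower than block j).                       *)
Section Automata.
Variables (I O Q K : finType) (q0 : Q)
  (delta : Q -> {set O} -> pbf ({set I} * Q)) (Acc : {set Q})
  (cls : Q -> K) (isN : K -> bool) (ltK : rel K).

Definition hesitant : Prop :=
  irreflexive ltK /\ transitive ltK /\
  forall (q : Q) (a : {set O}),
    (forall x, x \in atoms (delta q a) ->
       (cls x.2 == cls q) || ltK (cls x.2) (cls q)) /\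
    (if isN (cls q)
     then disj_related (fun x : {set I} * Q => cls x.2 == cls q) (delta q a)
     else conj_related (fun x : {set I} * Q => cls x.2 == cls q) (delta q a)).

(* A run-tree is represented by the (prefix-closed) set R of the label
   paths x = [:: (d_1,q_1); ...; (d_k,q_k)] from the root; the node x is
   labelled (map fst x, last q0 (map snd x)); the root [::] is labelled
   (epsilon, q0); the children of x are labelled by the set
   {(d,q') | R (rcons x (d,q'))}, which must satisfy delta. *)
Definition run_tree (l : ltree I O) (R : seq ({set I} * Q) -> Prop) : Prop :=
  R [::] /\
  (forall x a, R (rcons x a) -> R x) /\
  (forall x, R x ->
     peval (fun a => R (rcons x a))
           (delta (last q0 (map snd x)) (l (map fst x)))).

Definition branch (R : seq ({set I} * Q) -> Prop) (b : nat -> {set I} * Q)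
  : Prop := forall k, R (mkseq b k).

Definition bstates (b : nat -> {set I} * Q) (k : nat) : Q :=
  if k is k'.+1 then (b k').2 else q0.

Definition hesitant_accepting (st : nat -> Q) : Prop :=
  exists (j : K) (N : nat),
    (forall k, N <= k -> cls (st k) = j) /\
    (if isN j
     then (forall m, exists k, m <= k /\ st k \in Acc)
     else (exists m, forall k, m <= k -> st k \notin Acc)).

Definition accepts (l : ltree I O) : Prop :=
  exists R, run_tree l R /\
    forall b, branch R b -> hesitant_accepting (bstates b).

Definition rank_cmp (q q' : Q) (r r' : nat) : bool :=
  if cls q == cls q' then
    if isN (cls q) then (q \in Acc) || (r' < r)
    else if q \in Acc then r' < r else r' <= r
  else true.

End Automata.

(* Soundness: the label paths that respect the annotation form a run-tree.
   Along any of its branches the class of the automaton state can only descend,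
   so it eventually stays in one block Q_j.  From then on, in a Q^N block the
   rank decreases strictly at every non-accepting step, and in a Q^U block it
   never increases and decreases strictly at every accepting step; as ranks are
   natural numbers, the branch visits Acc infinitely resp. finitely often.

   Completeness: fix an accepting run-tree and let rch hold of the pairs (q, t)
   that label its nodes.  In a Q^N block, rank (q, t) by the least n such that
   some disjunct of delta reaches Acc within n steps inside the block; a pair
   with no such n would start a branch that stays in the block and avoids Acc.
   In a Q^U block, rank (q, t) by the number of accepting pairs reachable by
   forced moves: a move is forced when it is the only same-block atom of a
   clause whose other atoms are unreachable, so every run must take it, and a
   forced cycle through Acc would give a branch visiting Acc infinitely often. *)

From mathcomp Require Import all_boot boolp.
Set Implicit Arguments. Unset Strict Implicit. Unset Printing Implicit Defensive.

Section PositiveBooleanFormulas.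
Variable A : eqType.
Implicit Types (v w : A -> Prop) (b : pbf A).

Lemma sub_peval v w b : {in atoms b, forall a, v a -> w a} -> peval v b -> peval w b.
Proof.
elim: b => //= [a|b1 IH1 b2 IH2|b1 IH1 b2 IH2] vw.
- by apply: vw; rewrite inE.
- by case=> h1 h2; split; [apply: IH1 h1 | apply: IH2 h2] => a a_b;
    apply: vw; rewrite mem_cat a_b ?orbT.
- by case=> [h1|h2]; [left; apply: IH1 h1 | right; apply: IH2 h2] => a a_b;
    apply: vw; rewrite mem_cat a_b ?orbT.
Qed.

Lemma peval_dnfP v b :
  peval v b <-> exists2 c, c \in dnf b & {in c, forall a, v a}.
Proof.
elim: b => /= [||a|b1 IH1 b2 IH2|b1 IH1 b2 IH2].
- by split=> // _; exists [::]; rewrite ?mem_head.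
- by split=> // -[c]; rewrite in_nil.
- split=> [va|[c]]; last by rewrite inE => /eqP-> /(_ a (mem_head _ _)).
  by exists [:: a] => [|x]; rewrite ?mem_head // inE => /eqP->.
- rewrite IH1 IH2; split=> [[[c1 c1_in v_c1] [c2 c2_in v_c2]]|].
    exists (c1 ++ c2); first by apply/allpairsP; exists (c1, c2).
    by move=> a; rewrite mem_cat => /orP[/v_c1|/v_c2].
  case=> c /allpairsP[[c1 c2] [/= c1_in c2_in ->]] v_c.
  by split; [exists c1 | exists c2] => // a a_c; apply: v_c; rewrite mem_cat a_c ?orbT.
- rewrite IH1 IH2; split=> [[[c c_in v_c]|[c c_in v_c]]|[c]].
  + by exists c; rewrite // mem_cat c_in.
  + by exists c; rewrite // mem_cat c_in orbT.
  + by rewrite mem_cat => /orP[] c_in v_c; [left | right]; exists c.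
Qed.

Lemma peval_cnfP v b :
  peval v b <-> {in cnf b, forall C, exists2 a, a \in C & v a}.
Proof.
elim: b => /= [||a|b1 IH1 b2 IH2|b1 IH1 b2 IH2].
- by split=> // _ C; rewrite in_nil.
- by split=> // /(_ [::] (mem_head _ _)) [a]; rewrite in_nil.
- split=> [va C|/(_ [:: a] (mem_head _ _)) [x]]; last by rewrite inE => /eqP->.
  by rewrite inE => /eqP->; exists a; rewrite ?mem_head.
- rewrite IH1 IH2; split=> [[v_b1 v_b2] C|v_b].
    by rewrite mem_cat => /orP[/v_b1|/v_b2].
  by split=> C C_in; apply: v_b; rewrite mem_cat C_in ?orbT.
- rewrite IH1 IH2; split=> [v_b C /allpairsP[[C1 C2] [/= C1_in C2_in ->]]|v_b].
    have [a a_C va] : exists2 a, a \in C1 \/ a \in C2 & v a.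
      by case: v_b => [/(_ C1 C1_in)|/(_ C2 C2_in)] [a a_C va]; exists a; auto.
    by exists a; rewrite // mem_cat; case: a_C => ->; rewrite ?orbT.
  have [|not_b1] := pselect {in cnf b1, forall C, exists2 a, a \in C & v a}.
    by left.
  right=> C2 C2_in; apply: contrapT => not_C2; apply: not_b1 => C1 C1_in.
  apply: contrapT => not_C1.
  have C12_in : C1 ++ C2 \in cnf (BOr b1 b2) by apply/allpairsP; exists (C1, C2).
  have [a] := v_b _ C12_in.
  by rewrite mem_cat => /orP[] a_C va; [apply: not_C1 | apply: not_C2]; exists a.
Qed.

Lemma exists_common_level (F : nat -> A -> Prop) (c : seq A) :
  (forall n m a, n <= m -> F n a -> F m a) ->
  {in c, forall a, exists n, F n a} -> exists n, {in c, forall a, F n a}.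
Proof.
move=> F_mono; elim: c => [|a c IH] F_c; first by exists 0.
have [n F_n] : exists n, {in c, forall x, F n x}.
  by apply: IH => x x_c; apply: F_c; rewrite inE x_c orbT.
have [m F_m] := F_c a (mem_head a c).
exists (maxn n m) => x; rewrite inE => /predU1P[->|x_c].
  exact: F_mono (leq_maxr n m) F_m.
exact: F_mono (leq_maxl n m) (F_n x x_c).
Qed.

Lemma size_undup_le1_eq (s : seq A) :
  size (undup s) <= 1 -> {in s &, forall x y, x = y}.
Proof.
move=> s_le1 x y; rewrite -(mem_undup s) -[y \in s](mem_undup s).
by case: (undup s) s_le1 => [|z [|]] //= _; rewrite !inE => /eqP-> /eqP->.
Qed.

End PositiveBooleanFormulas.

Lemma take_mkseq (A : Type) (f : nat -> A) k n :
  k <= n -> take k (mkseq f n) = mkseq f k.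
Proof. by move=> kn; rewrite /mkseq -map_take take_iota (minn_idPl kn). Qed.

Lemma homo_leq_from (A : Type) (r : A -> A -> Prop) (f : nat -> A) N :
  (forall x, r x x) -> (forall y x z, r x y -> r y z -> r x z) ->
  (forall k, N <= k -> r (f k) (f k.+1)) ->
  forall i j, N <= i -> i <= j -> r (f i) (f j).
Proof.
move=> r_refl r_trans f_step i j Ni ij.
apply: (@homo_leq_in _ [pred k | N <= k] f r) => //; rewrite ?inE ?(leq_trans Ni) //.
  by move=> a c /= Na _ k /andP[ak _]; rewrite inE (leq_trans Na) // ltnW.
by move=> k /= Nk _; apply: f_step.
Qed.

Lemma noninc_eventually_const (f : nat -> nat) N :
  (forall k, N <= k -> f k.+1 <= f k) ->
  exists2 M, N <= M & forall k, M <= k -> f k = f M.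
Proof.
move=> f_step.
have f_le i j : N <= i -> i <= j -> f j <= f i.
  apply: (homo_leq_from (r := fun x y => y <= x)) => // y x z yx zy.
  exact: leq_trans zy yx.
pose P v := `[< exists2 k, N <= k & f k = v >].
have P_ex : exists v, P v by exists (f N); apply/asboolP; exists N.
case: (ex_minnP P_ex) => _ /asboolP[M NM <-] f_min.
exists M => // k Mk; apply/eqP; rewrite eqn_leq f_le //=.
by apply: f_min; apply/asboolP; exists k => //; apply: leq_trans Mk.
Qed.

Lemma descending_eventually_const (K : finType) (lt : rel K) (c : nat -> K) :
  irreflexive lt -> transitive lt ->
  (forall k, (c k.+1 == c k) || lt (c k.+1) (c k)) ->
  exists M, forall k, M <= k -> c k = c M.
Proof.
move=> lt_irr lt_trans c_step.
pose height j := #|[pred j' | lt j' j]|.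
have height_lt j' j : lt j' j -> height j' < height j.
  move=> j'j; apply: proper_card; apply/properP; split.
    by apply/subsetP => x; rewrite !inE => xj'; apply: lt_trans xj' j'j.
  by exists j'; rewrite !inE ?j'j ?lt_irr.
have [M _ height_M] : exists2 M, 0 <= M & forall k, M <= k -> height (c k) = height (c M).
  apply: (noninc_eventually_const (f := fun k => height (c k))) => k _.
  by case/orP: (c_step k) => [/eqP->|/height_lt/ltnW].
have c_const : forall i j, M <= i -> i <= j -> c j = c i.
  apply: (homo_leq_from (r := fun x y => y = x)) => // [y x z -> ->//|k Mk].
  case/orP: (c_step k) => [/eqP//|/height_lt].
  by rewrite (height_M k.+1 (leqW Mk)) (height_M k Mk) ltnn.
by exists M => k Mk; apply: c_const.
Qed.

Lemma extension_branch (A : Type) (a0 : A) (P : seq A -> Prop) (x0 : seq A) :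
  P x0 -> (forall x, P x -> exists2 y, 0 < size y & P (x ++ y)) ->
  exists b : nat -> A, forall m, exists2 n, m <= n & P (mkseq b n).
Proof.
move=> P_x0 P_ext.
have [ext ext_ok] : {ext : seq A -> seq A &
    forall x, P x -> 0 < size (ext x) /\ P (x ++ ext x)}.
  apply: (@choice _ _ (fun x y => P x -> 0 < size y /\ P (x ++ y))) => x.
  have [/P_ext[y y_gt0 P_xy]|not_Px] := pselect (P x).
    by exists y => _; split.
  by exists [::] => /not_Px.
pose X m := iter m (fun x => x ++ ext x) x0.
have X_S m : X m.+1 = X m ++ ext (X m) by [].
have P_X m : P (X m) by elim: m => // m /ext_ok[_]; rewrite X_S.
have size_X m : m <= size (X m).
  elim: m => // m IH; rewrite X_S size_cat -addn1 leq_add //.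
  by have [] := ext_ok _ (P_X m).
have X_cat m n : m <= n -> exists z, X n = X m ++ z.
  move/subnK <-; elim: (n - m) => [|d [z IH]]; first by exists [::]; rewrite cats0.
  by exists (z ++ ext (X (d + m))); rewrite addSn X_S IH catA.
exists (fun k => nth a0 (X k.+1) k) => m; exists (size (X m)) => //.
suff -> : mkseq (fun k => nth a0 (X k.+1) k) (size (X m)) = X m by [].
apply: (@eq_from_nth _ a0); rewrite size_mkseq // => i lt_i; rewrite nth_mkseq //.
have [z1 e1] := X_cat i.+1 (maxn i.+1 m) (leq_maxl _ _).
have [z2 e2] := X_cat m (maxn i.+1 m) (leq_maxr _ _).
have := congr1 (nth a0 ^~ i) (etrans (esym e1) e2).
by rewrite /= !nth_cat lt_i (leq_trans (leqnn i.+1) (size_X i.+1)).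
Qed.

Section HesitantAcceptance.
Variables (Q K : finType) (Acc : {set Q}) (cls : Q -> K) (isN : K -> bool).

Lemma hesitant_accepting_in_class (st : nat -> Q) j n0 :
  (forall k, n0 <= k -> cls (st k) = j) ->
  hesitant_accepting Acc cls isN st ->
  if isN j then forall m, exists k, m <= k /\ st k \in Acc
  else exists m, forall k, m <= k -> st k \notin Acc.
Proof.
move=> st_j [j' [N [st_j' acc]]].
suff -> : j = j' by [].
by rewrite -(st_j (N + n0)) ?leq_addl // st_j' ?leq_addr.
Qed.

Lemma rank_cmp_accepting (ltK : rel K) (st : nat -> Q) (r : nat -> nat) :
  irreflexive ltK -> transitive ltK ->
  (forall k, (cls (st k.+1) == cls (st k)) || ltK (cls (st k.+1)) (cls (st k))) ->
  (forall k, rank_cmp Acc cls isN (st k) (st k.+1) (r k) (r k.+1)) ->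
  hesitant_accepting Acc cls isN st.
Proof.
move=> lt_irr lt_trans cls_step r_cmp.
have [M cls_M] := descending_eventually_const lt_irr lt_trans cls_step.
have cmpE k : M <= k -> rank_cmp Acc cls isN (st k) (st k.+1) (r k) (r k.+1) =
    if isN (cls (st M)) then (st k \in Acc) || (r k.+1 < r k)
    else if st k \in Acc then r k.+1 < r k else r k.+1 <= r k.
  by move=> Mk; rewrite /rank_cmp (cls_M k.+1 (leqW Mk)) (cls_M k Mk) eqxx.
exists (cls (st M)), M; split=> //.
case: ifP cmpE => isN_M cmpE.
- move=> m; apply: contrapT => no_acc.
  have r_dec k : maxn m M <= k -> r k.+1 < r k.
    rewrite geq_max => /andP[mk Mk]; have := r_cmp k; rewrite cmpE //.
    by case: (boolP (st k \in Acc)) => // acc _; case: no_acc; exists k.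
  have [M' M'_ge r_const] := noninc_eventually_const (fun k k_ge => ltnW (r_dec k k_ge)).
  by have := r_dec M' M'_ge; rewrite (r_const M'.+1 (leqnSn M')) ltnn.
- have r_noninc k : M <= k -> r k.+1 <= r k.
    by move=> Mk; have := r_cmp k; rewrite cmpE //; case: ifP => // _ /ltnW.
  have [M' MM' r_const] := noninc_eventually_const r_noninc.
  exists M' => k M'k; apply/negP => acc.
  have := r_cmp k; rewrite cmpE ?(leq_trans MM') // acc.
  by rewrite (r_const k.+1 (leqW M'k)) (r_const k M'k) ltnn.
Qed.

End HesitantAcceptance.

Section MooreAnnotations.
Variables (I O T Q K : finType) (t0 : T) (tau : T -> {set I} -> T)
  (out : T -> {set O}) (q0 : Q) (delta : Q -> {set O} -> pbf ({set I} * Q))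
  (Acc : {set Q}) (cls : Q -> K) (isN : K -> bool) (ltK : rel K).
Hypothesis delta_hesitant : hesitant delta cls isN ltK.

Local Notation atom := ({set I} * Q)%type.
Local Notation tree := (comp_tree t0 tau out).

Definition valid_annotation (rch : Q -> T -> bool) (rho : Q -> T -> nat) : Prop :=
  rch q0 t0 /\
  forall q t, rch q t ->
    peval (fun a : atom => rch a.2 (tau t a.1) /\
             rank_cmp Acc cls isN q a.2 (rho q t) (rho a.2 (tau t a.1)))
          (delta q (out t)).

Definition state (x : seq atom) : Q := last q0 (map snd x).
Definition mstate (x : seq atom) : T := run_moore tau t0 (map fst x).

Lemma state_rcons x a : state (rcons x a) = a.2.
Proof. by rewrite /state map_rcons last_rcons. Qed.

Lemma mstate_rcons x a : mstate (rcons x a) = tau (mstate x) a.1.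
Proof. by rewrite /mstate map_rcons /run_moore foldl_rcons. Qed.

Lemma bstates_mkseq b k : bstates q0 b k = state (mkseq b k).
Proof. by case: k => // k; rewrite mkseqS state_rcons. Qed.

Section Soundness.
Variables (rch : Q -> T -> bool) (rho : Q -> T -> nat).
Hypothesis annot : valid_annotation rch rho.

Let rank x := rho (state x) (mstate x).

Inductive annot_run : seq atom -> Prop :=
| annot_run_nil : annot_run [::]
| annot_run_rcons x a : annot_run x ->
    a \in atoms (delta (state x) (out (mstate x))) ->
    rch (state (rcons x a)) (mstate (rcons x a)) ->
    rank_cmp Acc cls isN (state x) (state (rcons x a)) (rank x) (rank (rcons x a)) ->
    annot_run (rcons x a).

Lemma annot_run_rconsP x a : annot_run (rcons x a) ->
  [/\ annot_run x, a \in atoms (delta (state x) (out (mstate x))) &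
      rank_cmp Acc cls isN (state x) (state (rcons x a)) (rank x) (rank (rcons x a))].
Proof.
move Exa: (rcons x a) => y run_y; case: run_y Exa => [/(congr1 size)|y' a' ? ? _ ?].
  by rewrite size_rcons.
by case/rcons_inj => -> ->.
Qed.

Lemma annot_run_rch x : annot_run x -> rch (state x) (mstate x).
Proof. by case=> [|? ? _ _ ? _] //; exact: annot.1. Qed.

Lemma annot_run_tree : run_tree q0 delta tree annot_run.
Proof.
split; first exact: annot_run_nil.
split=> [x a /annot_run_rconsP[run_x _ _] //|x run_x].
move: (annot.2 _ _ (annot_run_rch run_x)); apply: sub_peval => a a_in [rch_a cmp_a].
by apply: annot_run_rcons; rewrite /rank ?state_rcons ?mstate_rcons.
Qed.

Lemma annot_branch_accepting b :
  branch annot_run b -> hesitant_accepting Acc cls isN (bstates q0 b).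
Proof.
move=> b_run; have [lt_irr [lt_trans cls_down]] := delta_hesitant.
apply: (rank_cmp_accepting (ltK := ltK) (r := fun k => rank (mkseq b k))) => // k;
  have := b_run k.+1; rewrite !bstates_mkseq mkseqS => /annot_run_rconsP[_ b_in cmp_b] //.
by rewrite state_rcons; exact: (cls_down _ _).1 _ b_in.
Qed.

Lemma annotation_sound : accepts q0 delta Acc cls isN tree.
Proof.
by exists annot_run; split; [exact: annot_run_tree | exact: annot_branch_accepting].
Qed.

End Soundness.

Section Completeness.
Variable R : seq atom -> Prop.
Hypothesis R_run : run_tree q0 delta tree R.
Hypothesis R_accepting :
  forall b, branch R b -> hesitant_accepting Acc cls isN (bstates q0 b).

Lemma R_take x i : R x -> R (take i x).
Proof.
have [_ [R_rcons _]] := R_run; rewrite -{1}(cat_take_drop i x).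
by elim/last_ind: (drop i x) => [|y a IH]; rewrite ?cats0 // -rcons_cat => /R_rcons.
Qed.

Lemma R_kids x :
  R x -> peval (fun a => R (rcons x a)) (delta (state x) (out (mstate x))).
Proof. by have [_ [_]] := R_run; apply. Qed.

Definition stays (S : pred Q) (n0 : nat) (y : seq atom) : Prop :=
  [/\ R y, n0 <= size y & forall i, n0 <= i <= size y -> S (state (take i y))].

Lemma stays_last S n0 y : stays S n0 y -> S (state y).
Proof. by case=> _ n0y S_y; rewrite -(take_size y); apply: S_y; rewrite n0y leqnn. Qed.

Lemma stays_rcons S n0 y a :
  stays S n0 y -> R (rcons y a) -> S a.2 -> stays S n0 (rcons y a).
Proof.
case=> _ n0y S_y R_ya S_a; split; rewrite ?size_rcons ?leqW // => i /andP[n0i].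
rewrite leq_eqVlt => /predU1P[->|].
  by rewrite -(size_rcons y a) take_size state_rcons.
by rewrite ltnS => iy; rewrite -cats1 takel_cat // S_y // n0i.
Qed.

Lemma stays_forever S n0 (P : seq atom -> Prop) x0 :
  (forall y, P y -> stays S n0 y) -> P x0 ->
  (forall y, P y -> exists2 z, 0 < size z & P (y ++ z)) ->
  exists b, [/\ hesitant_accepting Acc cls isN (bstates q0 b),
    forall k, n0 <= k -> S (bstates q0 b k) &
    forall m, exists2 n, m <= n & P (mkseq b n)].
Proof.
move=> P_stays P_x0 P_ext.
have [b P_b] := extension_branch (set0, q0) P_x0 P_ext.
have b_stays k : exists2 n, k <= n & stays S n0 (mkseq b n).
  by have [n kn /P_stays] := P_b k; exists n.
exists b; split=> //.
  apply: R_accepting => k; have [n kn [R_n _ _]] := b_stays k.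
  by rewrite -(take_mkseq b kn); apply: R_take.
move=> k n0k; have [n kn [_ _ S_n]] := b_stays k.
by rewrite bstates_mkseq -(take_mkseq b kn); apply: S_n; rewrite n0k size_mkseq.
Qed.

Definition rch q t : bool := `[< exists2 x, R x & (state x, mstate x) = (q, t) >].

Lemma rch_node x : R x -> rch (state x) (mstate x).
Proof. by move=> R_x; apply/asboolP; exists x. Qed.

Lemma rch_kid x a : R (rcons x a) -> rch a.2 (tau (mstate x) a.1).
Proof. by move/rch_node; rewrite state_rcons mstate_rcons. Qed.


Definition acc_step (S : Q -> T -> Prop) q t : Prop :=
  q \in Acc \/
  exists2 c, c \in dnf (delta q (out t)) &
    {in c, forall a : atom, rch a.2 (tau t a.1) /\ (cls a.2 = cls q -> S a.2 (tau t a.1))}.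

Definition acc_within n : Q -> T -> Prop := iter n.+1 acc_step (fun _ _ => False).

Lemma acc_within_mono n m q t : n <= m -> acc_within n q t -> acc_within m q t.
Proof.
have step_mono (S S' : Q -> T -> Prop) : (forall q t, S q t -> S' q t) ->
    forall q t, acc_step S q t -> acc_step S' q t.
  move=> SS' q' t' [acc|[c c_in S_c]]; [by left | right; exists c => //].
  by move=> a /S_c[rch_a S_a]; split=> // /S_a /SS'.
move=> nm; apply: (homo_leq_from (r := fun S S' => forall q t, S q t -> S' q t)
  (f := acc_within) (N := 0)) => // [S1 S2 S3 h12 h23 q' t' /h12/h23 //|k _].
by elim: k => [|k IH]; apply: step_mono.
Qed.

Lemma acc_within_descent n q t : acc_within n q t -> q \notin Acc ->
  exists2 c, c \in dnf (delta q (out t)) &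
    {in c, forall a : atom, rch a.2 (tau t a.1) /\
       (cls a.2 = cls q -> exists2 m, m < n & acc_within m a.2 (tau t a.1))}.
Proof.
case=> [->//|[c c_in c_ok]] _; exists c => // a /c_ok[rch_a lower]; split=> //.
by case: n {c_ok} lower => [lower /lower []|n lower /lower]; exists n.
Qed.

Definition buchi_rank q t : nat :=
  if pselect (exists n, `[< acc_within n q t >]) is left ranked then ex_minn ranked
  else 0.

Lemma buchi_rankP n q t :
  acc_within n q t -> acc_within (buchi_rank q t) q t /\ buchi_rank q t <= n.
Proof.
move=> acc_n; rewrite /buchi_rank; case: pselect => [ranked|[]].
  by case: ex_minnP => m /asboolP acc_m m_min; split=> //; apply/m_min/asboolP.
by exists n; apply/asboolP.
Qed.

Lemma buchi_node_ranked x : R x -> isN (cls (state x)) ->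
  exists n, acc_within n (state x) (mstate x).
Proof.
move=> R_x N_x; apply: contrapT => unranked_x.
pose j := cls (state x); pose S q := (cls q == j) && (q \notin Acc).
pose P y := stays S (size x) y /\ ~ exists n, acc_within n (state y) (mstate y).
have unranked_acc q t : ~ (exists n, acc_within n q t) -> q \notin Acc.
  by move=> unranked; apply/negP => acc; apply: unranked; exists 0; left.
have P_x : P x.
  split=> //; split=> // i; rewrite -eqn_leq => /eqP <-.
  by rewrite take_size /S eqxx (unranked_acc _ _ unranked_x).
have P_ext y : P y -> exists2 z, 0 < size z & P (y ++ z).
  case=> y_stays unranked_y; have [R_y _ _] := y_stays.
  have /andP[/eqP cls_y _] := stays_last y_stays.
  have [c c_in c_R] := (peval_dnfP _ _).1 (R_kids R_y).
  have [a a_c [cls_a unranked_a]] : exists2 a, a \in c &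
      cls a.2 = cls (state y) /\ ~ exists n, acc_within n a.2 (tau (mstate y) a.1).
    apply: contrapT => all_ranked; apply: unranked_y.
    have [n c_n] : exists n, {in c, forall a : atom,
        cls a.2 = cls (state y) -> acc_within n a.2 (tau (mstate y) a.1)}.
      apply: exists_common_level => [n m a nm acc_n /acc_n|a a_c].
        exact: acc_within_mono.
      have [same|diff] := pselect (cls a.2 = cls (state y)); last by exists 0.
      apply: contrapT => unranked_a; apply: all_ranked; exists a => //; split=> //.
      by case=> n acc_n; apply: unranked_a; exists n.
    exists n.+1; right; exists c => // a a_c.
    by split; [exact: rch_kid (c_R a a_c) | exact: c_n].
  exists [:: a] => //; rewrite cats1; split; last by rewrite state_rcons mstate_rcons.
  apply: stays_rcons => //; first exact: c_R.
  by rewrite /S cls_a cls_y eqxx (unranked_acc _ _ unranked_a).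
have [b [b_acc b_S _]] := stays_forever (P := P) (fun y => @proj1 _ _) P_x P_ext.
have b_j k : size x <= k -> cls (bstates q0 b k) = j by move/b_S/andP => [/eqP].
have := hesitant_accepting_in_class b_j b_acc; rewrite N_x => /(_ (size x))[k [k_ge acc]].
by have /andP[_] := b_S k k_ge; rewrite acc.
Qed.

(* By conjunctive relatedness [a] is then the only atom of [C] a run can use. *)
Definition forced q t (a : atom) : Prop :=
  exists2 C, C \in cnf (delta q (out t)) &
    a \in C /\ {in C, forall a' : atom, rch a'.2 (tau t a'.1) -> cls a'.2 = cls q}.

Definition forced_edge : rel (Q * T) := fun p p' =>
  `[< ~~ isN (cls p.1) /\
      exists a : atom,
        [/\ cls a.2 = cls p.1, forced p.1 p.2 a & p' = (a.2, tau p.2 a.1)] >].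

Lemma forced_kid x a : R x -> ~~ isN (cls (state x)) ->
  cls a.2 = cls (state x) -> forced (state x) (mstate x) a -> R (rcons x a).
Proof.
move=> R_x U_x cls_a [C C_in [a_C C_reach]].
have [a' a'_C R_xa'] := (peval_cnfP _ _).1 (R_kids R_x) C C_in.
have cls_a' := C_reach a' a'_C (rch_kid R_xa').
have [_ [_ /(_ (state x) (out (mstate x)))[_]]] := delta_hesitant.
rewrite (negbTE U_x) => /allP/(_ C C_in)/size_undup_le1_eq same_class_eq.
by rewrite (same_class_eq a a') // mem_filter /= ?cls_a ?cls_a' eqxx.
Qed.

Lemma forced_peval x : R x ->
  peval (fun a : atom => rch a.2 (tau (mstate x) a.1) /\
           (cls a.2 = cls (state x) -> forced (state x) (mstate x) a))
        (delta (state x) (out (mstate x))).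
Proof.
move=> R_x; apply/peval_cnfP => C C_in.
have [a a_C R_xa] := (peval_cnfP _ _).1 (R_kids R_x) C C_in.
have [[a' a'_C [rch_a' cls_a']]|C_same] := pselect (exists2 a', a' \in C &
    rch a'.2 (tau (mstate x) a'.1) /\ cls a'.2 <> cls (state x)).
  by exists a'.
exists a => //; split=> [|_]; first exact: rch_kid R_xa.
exists C => //; split=> // a' a'_C rch_a'; apply: contrapT => cls_a'.
by apply: C_same; exists a'.
Qed.

Lemma forced_path_lift j n0 p s y : path forced_edge p s ->
  stays (fun q => cls q == j) n0 y -> (state y, mstate y) = p ->
  exists z, [/\ size z = size s, stays (fun q => cls q == j) n0 (y ++ z) &
                (state (y ++ z), mstate (y ++ z)) = last p s].
Proof.
elim: s p y => [|p' s IH] p y /=; first by move=> _ y_stays <-; exists [::]; rewrite cats0.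
case/andP=> /asboolP[U_p [a [cls_a forced_a ->]]] s_path y_stays y_p; subst p.
have /eqP cls_y := stays_last y_stays.
have R_ya : R (rcons y a) by apply: forced_kid; case: y_stays.
have ya_stays : stays (fun q => cls q == j) n0 (rcons y a).
  by apply: stays_rcons; rewrite //= cls_a cls_y.
have [|z [size_z z_stays z_last]] := IH _ _ s_path ya_stays.
  by rewrite state_rcons mstate_rcons.
by exists (a :: z); rewrite -cat_rcons /= size_z.
Qed.

Lemma no_forced_acc_cycle q t p : rch q t -> q \in Acc ->
  forced_edge (q, t) p -> ~~ connect forced_edge p (q, t).
Proof.
move=> /asboolP[x0 R_x0 x0_qt] acc e_qt; apply/negP => /connectP[s s_path s_last].
have /asboolP[U_q _] := e_qt.
pose j := cls q.
pose P y := stays (fun q' => cls q' == j) (size x0) y /\ (state y, mstate y) = (q, t).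
have P_x0 : P x0.
  split=> //; split=> // i; rewrite -eqn_leq => /eqP <-.
  by case: x0_qt => state_x0 _; rewrite take_size state_x0.
have P_ext y : P y -> exists2 z, 0 < size z & P (y ++ z).
  case=> y_stays y_qt.
  have cycle_path : path forced_edge (q, t) (p :: s) by rewrite /= e_qt.
  have [z [size_z z_stays z_last]] := forced_path_lift cycle_path y_stays y_qt.
  by exists z; rewrite ?size_z //; split; rewrite // z_last /= -s_last.
have [b [b_acc b_j b_P]] := stays_forever (P := P) (fun y => @proj1 _ _) P_x0 P_ext.
have := hesitant_accepting_in_class (fun k k_ge => eqP (b_j k k_ge)) b_acc.
rewrite (negbTE U_q) => -[m no_acc].
have [n mn [_ [state_n _]]] := b_P m.
by have := no_acc n mn; rewrite bstates_mkseq state_n acc.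
Qed.

Definition cobuchi_rank q t : nat :=
  #|[pred p : Q * T | (p.1 \in Acc) && connect forced_edge (q, t) p]|.

Lemma cobuchi_rank_edge q t q' t' : rch q t -> forced_edge (q, t) (q', t') ->
  cobuchi_rank q' t' <= cobuchi_rank q t /\
  (q \in Acc -> cobuchi_rank q' t' < cobuchi_rank q t).
Proof.
move=> rch_qt e_qt.
have sub : [pred p : Q * T | (p.1 \in Acc) && connect forced_edge (q', t') p] \subset
           [pred p : Q * T | (p.1 \in Acc) && connect forced_edge (q, t) p].
  apply/subsetP => p; rewrite !inE => /andP[-> /= reach_p].
  exact: connect_trans (connect1 e_qt) reach_p.
split=> [|acc]; first exact: subset_leq_card.
apply: proper_card; apply/properP; split=> //.
exists (q, t); rewrite !inE /= acc ?connect0 //=.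
exact: no_forced_acc_cycle rch_qt acc e_qt.
Qed.

Definition run_rank q t : nat := if isN (cls q) then buchi_rank q t else cobuchi_rank q t.

Lemma run_annotation : valid_annotation rch run_rank.
Proof.
split; first by apply/asboolP; exists [::]; case: R_run.
move=> q t /asboolP[x R_x [<- <-]].
case N_x: (isN (cls (state x))).
- have [n acc_n] := buchi_node_ranked R_x N_x.
  have [acc_rank _] := buchi_rankP acc_n.
  case acc_x: (state x \in Acc).
    move: (R_kids R_x); apply: sub_peval => a _ R_xa; split; first exact: rch_kid R_xa.
    by rewrite /rank_cmp N_x acc_x; case: ifP.
  have [c c_in c_ok] := acc_within_descent acc_rank (negbT acc_x).
  apply/peval_dnfP; exists c => // a /c_ok[rch_a lower]; split=> //.
  rewrite /rank_cmp; case: eqP => // same; rewrite N_x acc_x /run_rank -same N_x.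
  have [m m_lt acc_m] := lower (esym same).
  by have [_ m_ge] := buchi_rankP acc_m; apply: leq_ltn_trans m_ge m_lt.
- move: (forced_peval R_x); apply: sub_peval => a _ [rch_a forced_a]; split=> //.
  rewrite /rank_cmp; case: eqP => // same.
  have e_xa : forced_edge (state x, mstate x) (a.2, tau (mstate x) a.1).
    by apply/asboolP; rewrite /= N_x; split=> //; exists a; split=> //; apply: forced_a.
  have [le lt] := cobuchi_rank_edge (rch_node R_x) e_xa.
  by rewrite N_x /run_rank -same N_x; case: ifP => [/lt|].
Qed.

End Completeness.

Theorem moore_annotationP :
  accepts q0 delta Acc cls isN tree <-> exists rch rho, valid_annotation rch rho.
Proof.
split=> [[R [R_run R_accepting]]|[rch [rho annot]]]; last exact: annotation_sound annot.
by exists (rch R), (run_rank R); apply: run_annotation.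
Qed.

End MooreAnnotations.

Theorem mainTheorem4
  (I O T Q K : finType)
  (t0 : T) (tau : T -> {set I} -> T) (out : T -> {set O})
  (Phi : sform I O)
  (q0 : Q) (delta : Q -> {set O} -> pbf ({set I} * Q)) (Acc : {set Q})
  (cls : Q -> K) (isN : K -> bool) (ltK : rel K) :
  hesitant delta cls isN ltK ->
  (forall l : ltree I O, accepts q0 delta Acc cls isN l <-> sat_s l [::] Phi) ->
  (moore_models t0 tau out Phi <->
   exists (rch : Q -> T -> bool) (rho : Q -> T -> nat),
     rch q0 t0 /\
     forall (q : Q) (t : T), rch q t ->
       peval (fun x : {set I} * Q =>
                rch x.2 (tau t x.1) /\
                rank_cmp Acc cls isN q x.2 (rho q t) (rho x.2 (tau t x.1)))
             (delta q (out t))).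
Proof.
move=> hes aut; rewrite /moore_models -aut.
exact: moore_annotationP hes.
Qed.
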